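(* Consider the complex-valued protocol. Let $\mathcal F$ be a Banach function space compactly and densely embedded in $C(\mathbf X)$, and let $M>0$ be such that $L:=\limsup_{\epsilon\to0}\mathcal H_\epsilon(U_{\mathcal F})/\log^M(1/\epsilon)\in(0,\infty)$. There exists a strategy for Predictor such that for every $F\in C(\mathbf X)$ there is $N_0$ (depending on $F$ but not on Reality's moves) such that for all $N\ge N_0$ and all moves of Reality $$\sum_{n=1}^N|y_n-\mu_n|^2\le\sum_{n=1}^N|y_n-F(x_n)|^2+C_M\inf_{\epsilon\in(0,1]}\left(L\left(\log^+\mathcal A^{\mathcal F}_\epsilon(F)\right)^M+L\log^M\frac1\epsilon+\epsilon N\right),$$ where $C_M$ is a constant depending only on $M$.
   Context: Complex-valued protocol: $\mathbf X$ a nonempty topological space; at each round $n$ Reality announces $x_n\in\mathbf X$, Predictor announces $\mu_n\in\mathbb C$, Reality announces $y_n\in\mathbb C$ with $|y_n|\le1$; a strategy for Predictor maps each history to $\mu_n$. $C(\mathbf X)$: bounded continuous complex-valued functions with the supremum norm. A Banach function space compactly and densely embedded in $C(\mathbf X)$: a linear subspace $\mathcal F\subseteq C(\mathbf X)$, dense in $C(\mathbf X)$ for the supremum norm, with a norm $\|\cdot\|_{\mathcal F}$ making it a Banach space whose unit ball $U_{\mathcal F}$ is compact in $C(\mathbf X)$. Approachability: $\mathcal A^{\mathcal F}_\epsilon(F):=\inf\{\|F^*\|_{\mathcal F}:F^*\in\mathcal F,\ \|F-F^*\|_{C(\mathbf X)}\le\epsilon\}$. $\mathcal H_\epsilon(A)$: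 $\log_2$ of the minimal size of an $\epsilon$-net of $A$ consisting of points of $A$. $\log=\log_2$; $\log^+t=\log t$ if $t\ge1$, else $0$. *)

From Stdlib Require Import Reals List.
From Coquelicot Require Import Coquelicot.
Open Scope R_scope.

Record topology (X : Type) := Topology {
  is_open : (X -> Prop) -> Prop;
  open_full : is_open (fun _ => True);
  open_inter : forall U V, is_open U -> is_open V -> is_open (fun x => U x /\ V x);
  open_union : forall (I : Type) (U : I -> X -> Prop),
      (forall i, is_open (U i)) -> is_open (fun x => exists i, U i x)
}.
Arguments is_open {X} _ _.

Definition continuous_top {X} (T : topology X) (F : X -> C) : Prop :=
  forall V : C -> Prop, open V -> is_open T (fun x => V (F x)).

Definition CX {X} (T : topology X) (F : X -> C) : Prop :=
  continuous_top T F /\ exists B : R, forall x, Cmod (F x) <= B.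

Definition supnorm {X} (F : X -> C) : R :=
  real (Lub_Rbar (fun r => exists x, r = Cmod (F x))).

Definition fadd {X} (f g : X -> C) : X -> C := fun x => Cplus (f x) (g x).
Definition fsub {X} (f g : X -> C) : X -> C := fun x => Cminus (f x) (g x).
Definition fscal {X} (c : C) (f : X -> C) : X -> C := fun x => Cmult c (f x).
Definition fzero {X} : X -> C := fun _ => RtoC 0.

Definition sup_open {X} (T : topology X) (O : (X -> C) -> Prop) : Prop :=
  forall f, O f -> exists r, 0 < r /\
    forall g, CX T g -> supnorm (fsub f g) < r -> O g.

Definition compact_CX {X} (T : topology X) (A : (X -> C) -> Prop) : Prop :=
  (forall f, A f -> CX T f) /\
  forall (I : Type) (U : I -> (X -> C) -> Prop),
    (forall i, sup_open T (U i)) ->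
    (forall a, A a -> exists i, U i a) ->
    exists l : list I, forall a, A a -> exists i, In i l /\ U i a.

Definition unit_ball {X} (Fsp : (X -> C) -> Prop) (nF : (X -> C) -> R) :=
  fun f => Fsp f /\ nF f <= 1.

Definition banach_cd_embedded {X} (T : topology X)
    (Fsp : (X -> C) -> Prop) (nF : (X -> C) -> R) : Prop :=
  (forall f, Fsp f -> CX T f) /\
  Fsp fzero /\
  (forall f g, Fsp f -> Fsp g -> Fsp (fadd f g)) /\
  (forall c f, Fsp f -> Fsp (fscal c f)) /\
  (forall f, Fsp f -> 0 <= nF f) /\
  (forall f, Fsp f -> nF f = 0 -> forall x, f x = RtoC 0) /\
  (forall c f, Fsp f -> nF (fscal c f) = Cmod c * nF f) /\
  (forall f g, Fsp f -> Fsp g -> nF (fadd f g) <= nF f + nF g) /\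
  (forall u : nat -> X -> C, (forall n, Fsp (u n)) ->
     (forall e, 0 < e -> exists N, forall m n, (N <= m)%nat -> (N <= n)%nat ->
                 nF (fsub (u m) (u n)) < e) ->
     exists g, Fsp g /\ forall e, 0 < e -> exists N, forall n, (N <= n)%nat ->
                 nF (fsub (u n) g) < e) /\
  (forall G, CX T G -> forall e, 0 < e -> exists f, Fsp f /\ supnorm (fsub G f) < e) /\
  compact_CX T (unit_ball Fsp nF).

Definition log2 (t : R) : R := ln t / ln 2.
Definition logp (t : R) : R := if Rle_dec 1 t then log2 t else 0.
(** real power with the convention 0^M = 0 (only applied to nonnegative bases) *)
Definition rpow (t M : R) : R := if Rlt_dec 0 t then Rpower t M else 0.

Definition has_net {X} (A : (X -> C) -> Prop) (eps : R) (n : nat) : Prop :=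
  exists l : list (X -> C), length l = n /\ (forall s, In s l -> A s) /\
    forall a, A a -> exists s, In s l /\ supnorm (fsub a s) <= eps.

Definition Hent {X} (A : (X -> C) -> Prop) (eps : R) : Rbar :=
  Glb_Rbar (fun r => exists n, has_net A eps n /\ r = log2 (INR n)).

Definition limsup0_is (g : R -> Rbar) (L : R) : Prop :=
  (forall e, 0 < e -> exists d, 0 < d /\ forall eps, 0 < eps < d ->
      Rbar_le (g eps) (Finite (L + e))) /\
  (forall e, 0 < e -> forall d, 0 < d -> exists eps, 0 < eps < d /\
      Rbar_le (Finite (L - e)) (g eps)).

Definition approach {X} (T : topology X) (Fsp : (X -> C) -> Prop) (nF : (X -> C) -> R)
    (eps : R) (F : X -> C) : R :=
  real (Glb_Rbar (fun r => exists Fs, Fsp Fs /\ supnorm (fsub F Fs) <= eps /\ r = nF Fs)).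

(** Predictor strategies: the history is the list of past pairs (x_i, y_i)
    together with the current x_n *)
Definition strategy (X : Type) := list (X * C) -> X -> C.

Definition history {X} (x : nat -> X) (y : nat -> C) (n : nat) : list (X * C) :=
  map (fun i => (x i, y i)) (seq 0 n).

Definition pred_move {X} (S : strategy X) (x : nat -> X) (y : nat -> C) (n : nat) : C :=
  S (history x y n) (x n).

(** sum_{i=0}^{N-1} f i  (rounds n = 1..N are indexed 0..N-1) *)
Definition sumN (f : nat -> R) (N : nat) : R :=
  fold_right Rplus 0 (map f (seq 0 N)).

From Stdlib Require Import Reals List.
From Coquelicot Require Import Coquelicot.
From Stdlib Require Import ZArith Lra Lia Psatz Classical ClassicalEpsilon.
Open Scope R_scope.

(** Predictor runs the aggregating algorithm for the square loss, which is
    mixable on the unit disc with learning rate [1/32], over countably many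
    experts: for every level [j] and every element [s] of a [4^-j]-net of the
    unit ball of [F], the expert [(j, s)] predicts [2^j s(x)] retracted to the
    unit disc.  It has prior weight [1 / ((j+1)(j+2) |net_j|)] and sleeps, copying
    the master forecast, until round [L (2j)^M]; so only finitely many experts
    are awake at any time.  The regret against [(j, s)] is at most
    [32 ln (|net_j| / prior)] plus [4] per sleeping round, and the entropy
    hypothesis makes both [O (L j^M)].

    Given [F] and [eps], take [F*] with [|F - F*| <= eps] and norm close to
    [A_eps(F)], and the level [j ~ log A_eps(F) + log (1/eps)].  Then [2^-j F*]
    lies in the unit ball, so some expert of level [j] is uniformly
    [2 eps]-close to [F]; this costs [8 eps N] extra loss, while
    [j^M <~ log^M A_eps(F) + log^M (1/eps)].  Large [N] absorbs the additive
    constant. *)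

Definition lsum {I} (l : list I) (f : I -> R) : R := fold_right Rplus 0 (map f l).

Section ListSums.
Context {I : Type}.
Implicit Types (l : list I) (f g : I -> R).

Lemma lsum_cons a l f : lsum (a :: l) f = f a + lsum l f.
Proof. reflexivity. Qed.

Lemma lsum_app l1 l2 f : lsum (l1 ++ l2) f = lsum l1 f + lsum l2 f.
Proof. unfold lsum; rewrite map_app, fold_right_app. induction (map f l1); cbn; lra. Qed.

Lemma lsum_ext l f g : (forall x, In x l -> f x = g x) -> lsum l f = lsum l g.
Proof.
  induction l as [|a l IH]; intros H; [reflexivity|].
  rewrite !lsum_cons, H, IH; cbn; auto.
  intros; apply H; cbn; auto.
Qed.

Lemma lsum_le l f g : (forall x, In x l -> f x <= g x) -> lsum l f <= lsum l g.
Proof.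
  induction l as [|a l IH]; intros H; [apply Rle_refl|].
  rewrite !lsum_cons; apply Rplus_le_compat; [apply H; cbn; auto|].
  apply IH; intros; apply H; cbn; auto.
Qed.

Lemma lsum_const l c : lsum l (fun _ => c) = INR (length l) * c.
Proof.
  induction l as [|a l IH]; [unfold lsum; cbn; lra|].
  rewrite lsum_cons, IH; cbn [length]; rewrite S_INR; lra.
Qed.

Lemma lsum_nonneg l f : (forall x, In x l -> 0 <= f x) -> 0 <= lsum l f.
Proof. intros H; rewrite <- (Rmult_0_r (INR (length l))), <- lsum_const; now apply lsum_le. Qed.

Lemma lsum_zero l f : (forall x, In x l -> f x = 0) -> lsum l f = 0.
Proof.
  induction l as [|a l IH]; intros H; [reflexivity|].
  rewrite lsum_cons, H, IH; cbn; auto; [lra|].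
  intros; apply H; cbn; auto.
Qed.

Lemma lsum_plus l f g : lsum l (fun x => f x + g x) = lsum l f + lsum l g.
Proof. induction l as [|a l IH]; [unfold lsum; cbn; lra|]. rewrite !lsum_cons, IH; lra. Qed.

Lemma lsum_scal l c f : lsum l (fun x => c * f x) = c * lsum l f.
Proof. induction l as [|a l IH]; [unfold lsum; cbn; lra|]. rewrite !lsum_cons, IH; lra. Qed.

Lemma lsum_in_le l f p : (forall x, In x l -> 0 <= f x) -> In p l -> f p <= lsum l f.
Proof.
  intros H Hp. induction l as [|a l IH]; [destruct Hp|]. rewrite lsum_cons.
  assert (0 <= f a) by (apply H; cbn; auto).
  assert (0 <= lsum l f) by (apply lsum_nonneg; intros; apply H; cbn; auto).
  destruct Hp as [<-|Hp]; [lra|].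
  assert (f p <= lsum l f) by (apply IH; auto; intros; apply H; cbn; auto). lra.
Qed.

End ListSums.

Lemma lsum_flat_map {I J} (l : list J) (k : J -> list I) (f : I -> R) :
  lsum (flat_map k l) f = lsum l (fun x => lsum (k x) f).
Proof.
  induction l as [|a l IH]; [reflexivity|].
  cbn [flat_map]. rewrite lsum_app, lsum_cons, IH; auto.
Qed.

Lemma lsum_map {I J} (l : list I) (k : I -> J) f : lsum (map k l) f = lsum l (fun x => f (k x)).
Proof. unfold lsum; rewrite map_map; reflexivity. Qed.

Lemma sumN_S f N : sumN f (S N) = sumN f N + f N.
Proof.
  unfold sumN; rewrite seq_S, map_app, fold_right_app; cbn.
  induction (map f (seq 0 N)); cbn; lra.
Qed.

Lemma sumN_ext f g N : (forall i, (i < N)%nat -> f i = g i) -> sumN f N = sumN g N.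
Proof. intros H; apply lsum_ext; intros i Hi%in_seq; apply H; lia. Qed.

Lemma sumN_le f g N : (forall i, (i < N)%nat -> f i <= g i) -> sumN f N <= sumN g N.
Proof. intros H; apply lsum_le; intros i Hi%in_seq; apply H; lia. Qed.

Lemma sumN_plus f g N : sumN (fun i => f i + g i) N = sumN f N + sumN g N.
Proof. apply lsum_plus. Qed.

Lemma sumN_scal c f N : sumN (fun i => c * f i) N = c * sumN f N.
Proof. apply lsum_scal. Qed.

Lemma sumN_const c N : sumN (fun _ => c) N = INR N * c.
Proof. unfold sumN; fold (lsum (seq 0 N) (fun _ => c)). rewrite lsum_const, length_seq; auto. Qed.

Lemma sumN_indicator_le (P : nat -> bool) K N :
  0 <= K -> (forall i, P i = true -> INR i < K) ->
  sumN (fun i => if P i then 1 else 0) N <= K + 1.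
Proof.
  intros HK HP.
  enough (sumN (fun i => if P i then 1 else 0) N <= Rmin (INR N) (K + 1))
    by (pose proof (Rmin_r (INR N) (K + 1)); lra).
  induction N as [|N IH]; [cbn; apply Rmin_glb; lra|].
  rewrite sumN_S, S_INR. pose proof (Rmin_l (INR N) (K + 1)). pose proof (Rmin_r (INR N) (K + 1)).
  destruct (P N) eqn:E; apply Rmin_glb; try lra. apply HP in E; lra.
Qed.

(** * The square loss on the unit disc *)

Lemma Cmod_le_iff_sqr (z w : C) :
  Cmod z <= Cmod w <-> fst z ^ 2 + snd z ^ 2 <= fst w ^ 2 + snd w ^ 2.
Proof.
  rewrite <- !Cmod2_alt. pose proof (Cmod_ge_0 z). pose proof (Cmod_ge_0 w).
  split; intros Hle; [apply pow_incr; lra | nra].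
Qed.

Lemma Cmod_le_1_iff (z : C) : Cmod z <= 1 <-> fst z ^ 2 + snd z ^ 2 <= 1.
Proof.
  pose proof (Cmod_le_iff_sqr z (RtoC 1)) as H. rewrite Cmod_1 in H; cbn in H.
  replace (1 * (1 * 1) + 0 * (0 * 1)) with 1 in H by ring. exact H.
Qed.

Lemma Cmod_sub_le_2 (y z : C) : Cmod y <= 1 -> Cmod z <= 1 -> Cmod (y - z) <= 2.
Proof. intros. unfold Cminus. eapply Rle_trans; [apply Cmod_triangle|]. rewrite Cmod_opp. lra. Qed.

Definition loss (y z : C) : R := Cmod (y - z) ^ 2.

Lemma loss_coord (y z : C) : loss y z = (fst y - fst z) ^ 2 + (snd y - snd z) ^ 2.
Proof. unfold loss; rewrite Cmod2_alt; cbn; ring. Qed.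

Lemma loss_le_4 (y z : C) : Cmod y <= 1 -> Cmod z <= 1 -> loss y z <= 4.
Proof.
  intros Hy Hz. pose proof (Cmod_sub_le_2 y z Hy Hz). pose proof (Cmod_ge_0 (y - z)).
  unfold loss; nra.
Qed.

Definition clip (z : C) : C :=
  if Rle_dec (Cmod z) 1 then z else Cmult (RtoC (/ Cmod z)) z.

Lemma clip_id (z : C) : Cmod z <= 1 -> clip z = z.
Proof. unfold clip; destruct (Rle_dec (Cmod z) 1); auto; lra. Qed.

Lemma clip_outside (z : C) : 1 < Cmod z -> Cmod (clip z) = 1 /\ z = Cmult (RtoC (Cmod z)) (clip z).
Proof.
  intros Hz. unfold clip; destruct (Rle_dec (Cmod z) 1) as [|_]; [lra|].
  rewrite Cmod_mult, Cmod_R, Rabs_right by (apply Rle_ge, Rlt_le, Rinv_0_lt_compat; lra).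
  split; [field; lra|].
  apply injective_projections; cbn; field; lra.
Qed.

Lemma clip_Cmod_le_1 (z : C) : Cmod (clip z) <= 1.
Proof.
  destruct (Rle_dec (Cmod z) 1) as [Hz|Hz]; [now rewrite clip_id|].
  rewrite (proj1 (clip_outside z ltac:(lra))); lra.
Qed.

Lemma Cmod_sub_unit_le_scaled (u b : C) (a : R) :
  Cmod u = 1 -> 1 <= a -> Cmod b <= 1 -> Cmod (u - b) <= Cmod (Cmult (RtoC a) u - b).
Proof.
  intros Hu Ha Hb. apply Cmod_le_iff_sqr.
  apply Cmod_le_1_iff in Hb. pose proof (Cmod2_alt u) as Eu. rewrite Hu in Eu.
  destruct u as [u1 u2], b as [b1 b2]; cbn in *.
  pose proof (pow2_ge_0 (u1 - b1)). pose proof (pow2_ge_0 (u2 - b2)).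
  assert (u1 * b1 + u2 * b2 <= 1) by nra.
  assert (0 <= (a - 1) * ((a + 1) - 2 * (u1 * b1 + u2 * b2))) by (apply Rmult_le_pos; lra).
  nra.
Qed.

Lemma Cmod_sub_unit_le_scaled2 (u w : C) (a b : R) :
  Cmod u = 1 -> Cmod w = 1 -> 1 <= a -> 1 <= b ->
  Cmod (u - w) <= Cmod (Cmult (RtoC a) u - Cmult (RtoC b) w).
Proof.
  intros Hu Hw Ha Hb. apply Cmod_le_iff_sqr.
  pose proof (Cmod2_alt u) as Eu. pose proof (Cmod2_alt w) as Ew.
  rewrite Hu in Eu. rewrite Hw in Ew.
  destruct u as [u1 u2], w as [w1 w2]; cbn in *.
  pose proof (pow2_ge_0 (u1 - w1)). pose proof (pow2_ge_0 (u2 - w2)).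
  assert (u1 * w1 + u2 * w2 <= 1) by nra.
  assert (0 <= (a * b - 1) * (1 - (u1 * w1 + u2 * w2))) by (apply Rmult_le_pos; nra).
  pose proof (pow2_ge_0 (a - b)). nra.
Qed.

Lemma clip_nonexpansive (a b : C) : Cmod (clip a - clip b) <= Cmod (a - b).
Proof.
  assert (Hsym : forall z w : C, Cmod (z - w) = Cmod (w - z)).
  { intros z w. replace (w - z)%C with (- (z - w))%C by (apply injective_projections; cbn; ring).
    now rewrite Cmod_opp. }
  destruct (Rle_dec (Cmod a) 1) as [Ha|Ha], (Rle_dec (Cmod b) 1) as [Hb|Hb].
  - rewrite !clip_id; lra.
  - destruct (clip_outside b ltac:(lra)) as [Hu Eb].
    rewrite (clip_id a Ha), (Hsym a b), (Hsym a (clip b)).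
    pose proof (Cmod_sub_unit_le_scaled (clip b) a (Cmod b) Hu ltac:(lra) Ha) as H.
    now rewrite <- Eb in H.
  - destruct (clip_outside a ltac:(lra)) as [Hu Ea].
    rewrite (clip_id b Hb).
    pose proof (Cmod_sub_unit_le_scaled (clip a) b (Cmod a) Hu ltac:(lra) Hb) as H.
    now rewrite <- Ea in H.
  - destruct (clip_outside a ltac:(lra)) as [Hu Ea], (clip_outside b ltac:(lra)) as [Hw Eb].
    pose proof (Cmod_sub_unit_le_scaled2 (clip a) (clip b) (Cmod a) (Cmod b) Hu Hw
      ltac:(lra) ltac:(lra)) as H.
    now rewrite <- Ea, <- Eb in H.
Qed.

(** With [eta = 1/32] the map [z |-> exp (- eta * loss y z)] is concave on the
    unit disc; [exp_loss_tangent] is the tangent-plane form of this fact. *)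
Definition eta : R := / 32.

Lemma exp_neg_le_1_sub (s q : R) : s <= 1/2 -> 2 * s ^ 2 <= q -> exp (- (s + q)) <= 1 - s.
Proof.
  intros Hs Hq.
  assert (Hmono : exp (- (s + q)) <= exp (- (s + 2 * s ^ 2))).
  { destruct (Rle_lt_or_eq_dec _ _ Hq) as [Hlt|<-]; [apply Rlt_le, exp_increasing|]; lra. }
  assert (1 + (s + 2 * s ^ 2) <= exp (s + 2 * s ^ 2)) by apply exp_ineq1_le.
  rewrite (exp_Ropp (s + 2 * s ^ 2)) in Hmono.
  assert (0 < 1 + (s + 2 * s ^ 2)) by nra.
  assert (/ exp (s + 2 * s ^ 2) <= / (1 + (s + 2 * s ^ 2))) by (apply Rinv_le_contravar; lra).
  enough (/ (1 + (s + 2 * s ^ 2)) <= 1 - s) by lra.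
  apply (Rmult_le_reg_l (1 + (s + 2 * s ^ 2))); [lra|]. rewrite Rinv_r by lra.
  assert (0 <= s ^ 2 * (1 - 2 * s)) by (apply Rmult_le_pos; nra). nra.
Qed.

Lemma exp_loss_tangent (y g m : C) : Cmod y <= 1 -> Cmod g <= 1 -> Cmod m <= 1 ->
  exp (- eta * loss y m) <=
  exp (- eta * loss y g) *
    (1 - 2 * eta * ((fst g - fst y) * (fst m - fst g) + (snd g - snd y) * (snd m - snd g))).
Proof.
  intros Hy Hg Hm.
  pose proof (loss_le_4 g y Hg Hy) as Hv. pose proof (loss_le_4 m g Hm Hg) as Hd.
  rewrite !loss_coord in *. unfold eta.
  destruct y as [y1 y2], g as [g1 g2], m as [m1 m2]; cbn [fst snd] in *.
  set (v1 := g1 - y1) in *. set (v2 := g2 - y2) in *.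
  set (d1 := m1 - g1) in *. set (d2 := m2 - g2) in *.
  assert (Hcs : (v1 * d1 + v2 * d2) ^ 2 <= 4 * (d1 ^ 2 + d2 ^ 2)).
  { assert ((v1 * d1 + v2 * d2) ^ 2 + (v1 * d2 - v2 * d1) ^ 2
            = (v1 ^ 2 + v2 ^ 2) * (d1 ^ 2 + d2 ^ 2)) by ring.
    pose proof (pow2_ge_0 (v1 * d2 - v2 * d1)). nra. }
  set (s := 2 * / 32 * (v1 * d1 + v2 * d2)). set (q := / 32 * (d1 ^ 2 + d2 ^ 2)).
  assert (Hs2 : s ^ 2 <= 1 / 16) by (unfold s; nra).
  assert (Hs : s <= 1 / 2) by nra.
  assert (Hq : 2 * s ^ 2 <= q) by (unfold s, q; nra).
  replace (- / 32 * ((y1 - m1) ^ 2 + (y2 - m2) ^ 2))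
    with (- / 32 * ((y1 - g1) ^ 2 + (y2 - g2) ^ 2) + - (s + q))
    by (unfold s, q, v1, v2, d1, d2; field).
  rewrite exp_plus. apply Rmult_le_compat_l; [apply Rlt_le, exp_pos|].
  exact (exp_neg_le_1_sub s q Hs Hq).
Qed.

Lemma sq_loss_mixable {I} (l : list I) (w : I -> R) (m : I -> C) (y g : C) :
  (forall i, In i l -> 0 <= w i) -> (forall i, In i l -> Cmod (m i) <= 1) ->
  Cmod y <= 1 -> Cmod g <= 1 ->
  lsum l (fun i => w i * fst (m i)) = lsum l w * fst g ->
  lsum l (fun i => w i * snd (m i)) = lsum l w * snd g ->
  lsum l (fun i => w i * exp (- eta * loss y (m i))) <= lsum l w * exp (- eta * loss y g).
Proof.
  intros Hw Hm Hy Hg E1 E2.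
  set (P := exp (- eta * loss y g)).
  set (c1 := 2 * eta * P * (fst g - fst y)). set (c2 := 2 * eta * P * (snd g - snd y)).
  set (c0 := P + c1 * fst g + c2 * snd g).
  transitivity (lsum l (fun i => c0 * w i + (- c1 * (w i * fst (m i)) + - c2 * (w i * snd (m i))))).
  - apply lsum_le. intros i Hi.
    pose proof (exp_loss_tangent y g (m i) Hy Hg (Hm i Hi)) as Ht. fold P in Ht.
    apply (Rmult_le_compat_l (w i)) in Ht; [|auto].
    unfold c0, c1, c2; lra.
  - rewrite !lsum_plus, !lsum_scal, E1, E2. unfold c0; lra.
Qed.

(** * The aggregating algorithm with sleeping experts *)

Definition prior (j : nat) : R := / ((INR j + 1) * (INR j + 2)).

Lemma prior_pos (j : nat) : 0 < prior j.
Proof. unfold prior. pose proof (pos_INR j). apply Rinv_0_lt_compat. nra. Qed.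

Lemma lsum_prior (B : nat) : lsum (seq 0 B) prior = 1 - / (INR B + 1).
Proof.
  induction B as [|B IH]; [cbn; field|].
  rewrite seq_S, lsum_app, IH, lsum_cons, Nat.add_0_l, S_INR. unfold prior.
  cbn [lsum map fold_right]. pose proof (pos_INR B). field. lra.
Qed.

Lemma lsum_prior_le_1 (B : nat) : lsum (seq 0 B) prior <= 1.
Proof.
  rewrite lsum_prior. pose proof (pos_INR B).
  assert (0 < / (INR B + 1)) by (apply Rinv_0_lt_compat; lra). lra.
Qed.

Lemma Cmod_weighted_sum_le {I} (l : list I) (w : I -> R) (z : I -> C) :
  (forall i, In i l -> 0 <= w i) -> (forall i, In i l -> Cmod (z i) <= 1) ->
  Cmod (lsum l (fun i => w i * fst (z i)), lsum l (fun i => w i * snd (z i))) <= lsum l w.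
Proof.
  induction l as [|a l IH]; intros Hw Hz.
  - change (Cmod (RtoC 0) <= 0). rewrite Cmod_0; lra.
  - rewrite !lsum_cons.
    replace (w a * fst (z a) + lsum l (fun i => w i * fst (z i)),
             w a * snd (z a) + lsum l (fun i => w i * snd (z i)))
      with (Cplus (Cmult (RtoC (w a)) (z a)) (lsum l (fun i => w i * fst (z i)),
                                              lsum l (fun i => w i * snd (z i))))
      by (apply injective_projections; cbn; ring).
    eapply Rle_trans; [apply Cmod_triangle|].
    rewrite Cmod_mult, Cmod_R, Rabs_right by (apply Rle_ge, Hw; cbn; auto).
    apply Rplus_le_compat.
    + pose proof (Hw a (or_introl eq_refl)). pose proof (Hz a (or_introl eq_refl)). nra.
    + apply IH; intros; [apply Hw | apply Hz]; cbn; auto.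
Qed.

Section Aggregating.

Context {X E : Type}.
Variables (net : nat -> list E) (expert : nat -> E -> X -> C) (active : nat -> nat -> bool).
Hypothesis net_nonempty : forall j, (0 < length (net j))%nat.
Hypothesis expert_Cmod_le_1 : forall j s x, Cmod (expert j s x) <= 1.
Hypothesis active_0 : forall n, active 0 n = true.
Hypothesis active_le_pow2 : forall j n, active j n = true -> (j <= 2 ^ n)%nat.

Definition pool (B : nat) : list (nat * E) :=
  flat_map (fun j => map (pair j) (net j)) (seq 0 B).

Lemma in_pool (B j : nat) (s : E) : (j < B)%nat -> In s (net j) -> In (j, s) (pool B).
Proof.
  intros Hj Hs. apply in_flat_map. exists j.
  split; [apply in_seq; lia | now apply in_map].
Qed.

Lemma lsum_pool_truncate (B K : nat) (f : nat * E -> R) :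
  (K <= B)%nat -> (forall p, (K <= fst p)%nat -> f p = 0) -> lsum (pool B) f = lsum (pool K) f.
Proof.
  intros HK Hf. unfold pool. replace B with (K + (B - K))%nat by lia.
  rewrite seq_app, flat_map_app, lsum_app, (lsum_zero (flat_map _ (seq (0 + K) _))); [lra|].
  intros p (j & Hj%in_seq & Hp)%in_flat_map. apply Hf.
  apply in_map_iff in Hp as (s & <- & _); cbn; lia.
Qed.

Lemma lsum_pool_prior (B : nat) :
  lsum (pool B) (fun p => prior (fst p) / INR (length (net (fst p)))) = lsum (seq 0 B) prior.
Proof.
  unfold pool. rewrite lsum_flat_map. apply lsum_ext. intros j _.
  rewrite lsum_map; cbn [fst]; rewrite lsum_const.
  field. apply not_0_INR. specialize (net_nonempty j). lia.
Qed.

Definition mu (p : nat * E) (xs : nat -> X) (g : nat -> C) (n : nat) : C :=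
  if active (fst p) n then expert (fst p) (snd p) (xs n) else g n.

Definition cumloss (ys f : nat -> C) (n : nat) : R := sumN (fun i => loss (ys i) (f i)) n.

Definition weight (p : nat * E) (xs : nat -> X) (ys g : nat -> C) (n : nat) : R :=
  prior (fst p) / INR (length (net (fst p))) * exp (- eta * cumloss ys (mu p xs g) n).

Definition awake_sum (xs : nat -> X) (ys g : nat -> C) (n : nat) (h : nat * E -> R) : R :=
  lsum (pool (2 ^ n + 1))
    (fun p => if active (fst p) n then weight p xs ys g n * h p else 0).

Definition aggregate (xs : nat -> X) (ys g : nat -> C) (n : nat) : C :=
  (awake_sum xs ys g n (fun p => fst (expert (fst p) (snd p) (xs n)))
     / awake_sum xs ys g n (fun _ => 1),
   awake_sum xs ys g n (fun p => snd (expert (fst p) (snd p) (xs n)))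
     / awake_sum xs ys g n (fun _ => 1)).

Lemma weight_pos p xs ys g n : 0 < weight p xs ys g n.
Proof.
  unfold weight. apply Rmult_lt_0_compat; [|apply exp_pos].
  apply Rdiv_lt_0_compat; [apply prior_pos | apply lt_0_INR, net_nonempty].
Qed.

Lemma awake_sum_1_pos xs ys g n : 0 < awake_sum xs ys g n (fun _ => 1).
Proof.
  specialize (net_nonempty 0) as H0. destruct (net 0) as [|s0 l0] eqn:E0; [cbn in H0; lia|].
  unfold awake_sum. eapply Rlt_le_trans;
    [|apply (lsum_in_le _ _ (0%nat, s0)); [|apply in_pool; [lia | rewrite E0; cbn; auto]]].
  - cbn [fst]. rewrite active_0, Rmult_1_r. apply weight_pos.
  - intros p _. destruct (active (fst p) n); [rewrite Rmult_1_r; apply Rlt_le, weight_pos | lra].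
Qed.

Lemma aggregate_Cmod_le_1 xs ys g n : Cmod (aggregate xs ys g n) <= 1.
Proof.
  pose proof (awake_sum_1_pos xs ys g n) as HW.
  set (W := awake_sum xs ys g n (fun _ => 1)) in *.
  set (w := fun p : nat * E => if active (fst p) n then weight p xs ys g n else 0).
  assert (Hsum : forall h, awake_sum xs ys g n h = lsum (pool (2 ^ n + 1)) (fun p => w p * h p)).
  { intros h. apply lsum_ext. intros p _. unfold w. destruct (active (fst p) n); lra. }
  assert (Hw : forall p, 0 <= w p).
  { intros p. unfold w. destruct (active (fst p) n); [apply Rlt_le, weight_pos | lra]. }
  assert (HWw : W = lsum (pool (2 ^ n + 1)) w).
  { unfold W. rewrite Hsum. apply lsum_ext. intros; lra. }
  replace (aggregate xs ys g n) with (Cmult (RtoC (/ W))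
     (lsum (pool (2 ^ n + 1)) (fun p => w p * fst (expert (fst p) (snd p) (xs n))),
      lsum (pool (2 ^ n + 1)) (fun p => w p * snd (expert (fst p) (snd p) (xs n)))))
    by (unfold aggregate; fold W; rewrite !Hsum; apply injective_projections; cbn; field; lra).
  rewrite Cmod_mult, Cmod_R, Rabs_right by (apply Rle_ge, Rlt_le, Rinv_0_lt_compat; lra).
  apply (Rmult_le_reg_l W); [lra|]. rewrite <- Rmult_assoc, Rinv_r, Rmult_1_l, Rmult_1_r by lra.
  rewrite HWw. apply (Cmod_weighted_sum_le _ _ (fun p => expert (fst p) (snd p) (xs n))); auto.
Qed.
(** Once [B > 2^n], the levels [>= B] have slept through rounds [0 .. n-1], so
    their total weight is the second summand: the potential is the total weight
    of all experts. *)
Definition potential (xs : nat -> X) (ys g : nat -> C) (B n : nat) : R :=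
  lsum (pool B) (fun p => weight p xs ys g n)
  + (1 - lsum (seq 0 B) prior) * exp (- eta * cumloss ys g n).

Lemma cumloss_S ys f n : cumloss ys f (S n) = cumloss ys f n + loss (ys n) (f n).
Proof. apply sumN_S. Qed.

Lemma potential_0 xs ys g B : potential xs ys g B 0 = 1.
Proof.
  unfold potential, weight. change (cumloss ys ?f 0) with 0.
  rewrite Rmult_0_r, exp_0, Rmult_1_r.
  rewrite (lsum_ext _ _ (fun p => prior (fst p) / INR (length (net (fst p)))))
    by (intros; apply Rmult_1_r).
  rewrite lsum_pool_prior; ring.
Qed.

Lemma weight_S p xs ys g n :
  weight p xs ys g (S n) = weight p xs ys g n * exp (- eta * loss (ys n) (mu p xs g n)).
Proof. unfold weight. rewrite cumloss_S, Rmult_plus_distr_l, exp_plus. ring. Qed.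

(** Because sleeping experts copy [g n], the full weighted mean of the [mu]'s is
    the awake weighted mean, which is [g n] itself. *)
Lemma lsum_pool_mu xs ys g B n (c : C -> R) :
  (2 ^ n + 1 <= B)%nat ->
  c (g n) * awake_sum xs ys g n (fun _ => 1)
    = awake_sum xs ys g n (fun p => c (expert (fst p) (snd p) (xs n))) ->
  lsum (pool B) (fun p => weight p xs ys g n * c (mu p xs g n))
    = lsum (pool B) (fun p => weight p xs ys g n) * c (g n).
Proof.
  intros HB Hc.
  set (w := fun p => weight p xs ys g n).
  set (asleep := fun p : nat * E => if active (fst p) n then 0 else w p).
  assert (Hawake : forall h, lsum (pool B) (fun p => if active (fst p) n then w p * h p else 0)
                             = awake_sum xs ys g n h).
  { intros h. apply lsum_pool_truncate; [lia|]. intros p Hp.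
    destruct (active (fst p) n) eqn:Ea; [apply active_le_pow2 in Ea; lia | reflexivity]. }
  rewrite (lsum_ext _ _ (fun p =>
      (if active (fst p) n then w p * c (expert (fst p) (snd p) (xs n)) else 0)
      + c (g n) * asleep p))
    by (intros p _; unfold mu, asleep, w; destruct (active (fst p) n); ring).
  rewrite (lsum_ext _ w (fun p => (if active (fst p) n then w p * 1 else 0) + asleep p))
    by (intros p _; unfold asleep; destruct (active (fst p) n); ring).
  rewrite !lsum_plus, lsum_scal, !Hawake, <- Hc. ring.
Qed.

Lemma potential_step xs ys g B n :
  (2 ^ n + 1 <= B)%nat -> g n = aggregate xs ys g n -> Cmod (ys n) <= 1 ->
  potential xs ys g B (S n) <= potential xs ys g B n * exp (- eta * loss (ys n) (g n)).
Proof.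
  intros HB Hg Hy.
  assert (Hgn : Cmod (g n) <= 1) by (rewrite Hg; apply aggregate_Cmod_le_1).
  pose proof (awake_sum_1_pos xs ys g n) as HW.
  assert (Hmix :
    lsum (pool B) (fun p => weight p xs ys g n * exp (- eta * loss (ys n) (mu p xs g n)))
    <= lsum (pool B) (fun p => weight p xs ys g n) * exp (- eta * loss (ys n) (g n))).
  { apply sq_loss_mixable; auto.
    - intros p _; apply Rlt_le, weight_pos.
    - intros p _; unfold mu; destruct (active (fst p) n); auto.
    - apply lsum_pool_mu; auto. rewrite Hg at 1; unfold aggregate; cbn [fst]; field; lra.
    - apply lsum_pool_mu; auto. rewrite Hg at 1; unfold aggregate; cbn [snd]; field; lra. }
  unfold potential. rewrite (lsum_ext _ _ _ (fun p _ => weight_S p xs ys g n)).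
  rewrite cumloss_S, Rmult_plus_distr_l, exp_plus. lra.
Qed.

Lemma potential_le_exp xs ys g B N :
  (2 ^ N + 1 <= B)%nat -> (forall k, g k = aggregate xs ys g k) -> (forall i, Cmod (ys i) <= 1) ->
  potential xs ys g B N <= exp (- eta * cumloss ys g N).
Proof.
  intros HB Hg Hy. induction N as [|N IH].
  - rewrite potential_0. change (cumloss ys g 0) with 0. rewrite Rmult_0_r, exp_0; lra.
  - assert (2 ^ N <= 2 ^ S N)%nat by (apply Nat.pow_le_mono_r; lia).
    eapply Rle_trans; [apply potential_step; auto; lia|].
    rewrite cumloss_S, Rmult_plus_distr_l, exp_plus.
    apply Rmult_le_compat_r; [apply Rlt_le, exp_pos | apply IH; lia].
Qed.

Lemma cumloss_le_expert xs ys g N j s :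
  (forall k, g k = aggregate xs ys g k) -> (forall i, Cmod (ys i) <= 1) -> In s (net j) ->
  cumloss ys g N
  <= cumloss ys (mu (j, s) xs g) N + / eta * (ln (INR (length (net j))) - ln (prior j)).
Proof.
  intros Hg Hy Hs.
  set (B := (2 ^ N + 1 + j + 1)%nat).
  assert (Hwp : weight (j, s) xs ys g N <= potential xs ys g B N).
  { unfold potential.
    assert (0 <= (1 - lsum (seq 0 B) prior) * exp (- eta * cumloss ys g N)).
    { apply Rmult_le_pos; [pose proof (lsum_prior_le_1 B); lra | apply Rlt_le, exp_pos]. }
    assert (weight (j, s) xs ys g N <= lsum (pool B) (fun p => weight p xs ys g N)).
    { apply (lsum_in_le _ (fun p => weight p xs ys g N));
        [intros; apply Rlt_le, weight_pos | apply in_pool; auto; unfold B; lia]. }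
    lra. }
  pose proof (potential_le_exp xs ys g B N ltac:(unfold B; lia) Hg Hy) as Hpot.
  pose proof (weight_pos (j, s) xs ys g N) as Hw.
  assert (Hln : ln (weight (j, s) xs ys g N) <= - eta * cumloss ys g N)
    by (rewrite <- (ln_exp (- eta * _)); apply ln_le; lra).
  pose proof (prior_pos j). pose proof (lt_0_INR _ (net_nonempty j)).
  unfold weight in Hln; cbn [fst] in Hln. unfold Rdiv in Hln.
  rewrite !ln_mult, ln_exp, ln_Rinv in Hln
    by (repeat apply Rmult_lt_0_compat; auto using exp_pos, Rinv_0_lt_compat).
  unfold eta in *. lra.
Qed.


Lemma aggregate_ext (xs xs' : nat -> X) (ys ys' g g' : nat -> C) n :
  (forall i, (i <= n)%nat -> xs i = xs' i) -> (forall i, (i < n)%nat -> ys i = ys' i) ->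
  (forall i, (i < n)%nat -> g i = g' i) ->
  aggregate xs ys g n = aggregate xs' ys' g' n.
Proof.
  intros Hx Hy Hg.
  assert (Hw : forall p, weight p xs ys g n = weight p xs' ys' g' n).
  { intros p. unfold weight, cumloss. do 3 f_equal. apply sumN_ext. intros i Hi.
    unfold mu. rewrite Hx, Hy, Hg by lia. reflexivity. }
  assert (Hs : forall h, awake_sum xs ys g n h = awake_sum xs' ys' g' n h)
    by (intros h; apply lsum_ext; intros p _; now rewrite Hw).
  unfold aggregate. rewrite !Hs, Hx by lia. reflexivity.
Qed.

(** Through the sleeping experts the master forecast of round [n] depends on the
    earlier ones, so the forecasts are built as a growing list. *)
Fixpoint forecasts (xs : nat -> X) (ys : nat -> C) (n : nat) : list C :=
  match n with
  | O => nil
  | S k => forecasts xs ys k ++ aggregate xs ys (fun i => nth i (forecasts xs ys k) 0) k :: nil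
  end.

Definition forecast (xs : nat -> X) (ys : nat -> C) (n : nat) : C :=
  aggregate xs ys (fun i => nth i (forecasts xs ys n) 0) n.

Lemma length_forecasts xs ys n : length (forecasts xs ys n) = n.
Proof. induction n as [|n IH]; cbn; auto. rewrite length_app, IH; cbn; lia. Qed.

Lemma nth_forecasts xs ys n k : (k < n)%nat -> nth k (forecasts xs ys n) 0 = forecast xs ys k.
Proof.
  induction n as [|n IH]; intros Hk; [lia|]. cbn [forecasts].
  destruct (Nat.lt_ge_cases k n).
  - rewrite app_nth1 by (rewrite length_forecasts; auto). auto.
  - assert (k = n) as -> by lia.
    rewrite app_nth2, length_forecasts, Nat.sub_diag by (rewrite length_forecasts; lia).
    reflexivity.
Qed.

Lemma forecast_fixpoint xs ys n : forecast xs ys n = aggregate xs ys (forecast xs ys) n.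
Proof. apply aggregate_ext; auto. intros i Hi. now apply nth_forecasts. Qed.

Lemma forecasts_ext (xs xs' : nat -> X) (ys ys' : nat -> C) n :
  (forall i, (i < n)%nat -> xs i = xs' i) -> (forall i, (i < n)%nat -> ys i = ys' i) ->
  forecasts xs ys n = forecasts xs' ys' n.
Proof.
  induction n as [|n IH]; intros Hx Hy; [reflexivity|]. cbn [forecasts].
  rewrite IH by auto. do 2 f_equal.
  apply aggregate_ext; intros i Hi; try reflexivity; [apply Hx | apply Hy]; lia.
Qed.

(** Round [length h] is the current one, with input [x]. *)
Definition aa_strategy : strategy X := fun h x =>
  let xs i := if Nat.ltb i (length h) then fst (nth i h (x, RtoC 0)) else x in
  let ys i := snd (nth i h (x, RtoC 0)) in
  forecast xs ys (length h).

Lemma nth_history (x : nat -> X) (y : nat -> C) n i d :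
  (i < n)%nat -> nth i (history x y n) d = (x i, y i).
Proof.
  intros Hi. unfold history.
  rewrite (nth_indep _ d (x 0%nat, y 0%nat)) by (rewrite length_map, length_seq; auto).
  rewrite (map_nth (fun i => (x i, y i))), seq_nth; auto.
Qed.

Lemma pred_move_aa_strategy (x : nat -> X) (y : nat -> C) n :
  pred_move aa_strategy x y n = forecast x y n.
Proof.
  unfold pred_move, aa_strategy.
  replace (length (history x y n)) with n by (unfold history; rewrite length_map, length_seq; auto).
  unfold forecast. rewrite (forecasts_ext _ x _ y).
  - apply aggregate_ext; auto.
    + intros i Hi. destruct (Nat.ltb_spec i n); [rewrite nth_history; auto|].
      now replace i with n by lia.
    + intros i Hi. now rewrite nth_history.
  - intros i Hi. destruct (Nat.ltb_spec i n); [now rewrite nth_history | lia].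
  - intros i Hi. now rewrite nth_history.
Qed.

End Aggregating.

Lemma rpow_0 (M : R) : rpow 0 M = 0.
Proof. unfold rpow. destruct (Rlt_dec 0 0); lra. Qed.

Lemma rpow_pos (t M : R) : 0 < t -> rpow t M = Rpower t M.
Proof. intros. unfold rpow. destruct (Rlt_dec 0 t); auto; lra. Qed.

Lemma rpow_ge0 (t M : R) : 0 <= rpow t M.
Proof. unfold rpow. destruct (Rlt_dec 0 t); [apply Rlt_le, exp_pos | lra]. Qed.

Lemma rpow_le_compat (a b M : R) : 0 < M -> 0 <= a <= b -> rpow a M <= rpow b M.
Proof.
  intros HM [Ha Hab]. destruct (Req_dec a 0) as [->|Ha0]; [rewrite rpow_0; apply rpow_ge0|].
  rewrite !rpow_pos by lra. apply Rle_Rpower_l; lra.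
Qed.

Lemma rpow_mult_l (c t M : R) : 0 < c -> 0 <= t -> rpow (c * t) M = Rpower c M * rpow t M.
Proof.
  intros Hc Ht. destruct (Req_dec t 0) as [->|Ht0]; [rewrite Rmult_0_r, !rpow_0; ring|].
  rewrite !rpow_pos by nra. symmetry; apply Rpower_mult_distr; lra.
Qed.

Lemma rpow_sum3_le (x y z M : R) : 0 < M -> 0 <= x -> 0 <= y -> 0 <= z ->
  rpow (x + y + z) M <= Rpower 3 M * (rpow x M + rpow y M + rpow z M).
Proof.
  intros HM Hx Hy Hz.
  set (m := Rmax x (Rmax y z)).
  assert (Hm : rpow m M <= rpow x M + rpow y M + rpow z M).
  { pose proof (rpow_ge0 x M). pose proof (rpow_ge0 y M). pose proof (rpow_ge0 z M).
    unfold m, Rmax. destruct (Rle_dec y z), (Rle_dec x _); lra. }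
  assert (Hsum : rpow (x + y + z) M <= rpow (3 * m) M).
  { apply rpow_le_compat; auto. pose proof (Rmax_l x (Rmax y z)).
    pose proof (Rmax_r x (Rmax y z)). pose proof (Rmax_l y z). pose proof (Rmax_r y z).
    unfold m; lra. }
  rewrite rpow_mult_l in Hsum by (try lra; unfold m; pose proof (Rmax_l x (Rmax y z)); lra).
  assert (0 < Rpower 3 M) by apply exp_pos. nra.
Qed.

Lemma ln2_pos : 0 < ln 2.
Proof. pose proof ln_lt_2. lra. Qed.

Lemma ln2_lt_1 : ln 2 < 1.
Proof.
  rewrite <- (ln_exp 1). apply ln_increasing; [lra|].
  pose proof (exp_ineq1 1 ltac:(lra)). lra.
Qed.

Lemma log2_ge0 (t : R) : 1 <= t -> 0 <= log2 t.
Proof.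
  intros Ht. unfold log2. pose proof ln2_pos. apply Rdiv_le_0_compat; [|lra].
  rewrite <- ln_1. apply ln_le; lra.
Qed.

Lemma log2_le (x y : R) : 0 < x -> x <= y -> log2 x <= log2 y.
Proof.
  intros. unfold log2, Rdiv. pose proof ln2_pos.
  apply Rmult_le_compat_r; [apply Rlt_le, Rinv_0_lt_compat; lra | apply ln_le; lra].
Qed.

Lemma log2_lt (x y : R) : 0 < x -> x < y -> log2 x < log2 y.
Proof.
  intros. unfold log2, Rdiv. pose proof ln2_pos.
  apply Rmult_lt_compat_r; [apply Rinv_0_lt_compat; lra | apply ln_increasing; lra].
Qed.

Lemma log2_mult (x y : R) : 0 < x -> 0 < y -> log2 (x * y) = log2 x + log2 y.
Proof. intros. unfold log2. rewrite ln_mult by auto. pose proof ln2_pos. field. lra. Qed.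

Lemma log2_pow2 (n : nat) : log2 (2 ^ n) = INR n.
Proof. unfold log2. rewrite ln_pow by lra. pose proof ln2_pos. field. lra. Qed.

Lemma log2_Rpower (t : R) : log2 (Rpower 2 t) = t.
Proof. unfold log2, Rpower. rewrite ln_exp. pose proof ln2_pos. field. lra. Qed.

Lemma Rpower_log2 (y : R) : 0 < y -> Rpower 2 (log2 y) = y.
Proof.
  intros Hy. unfold Rpower, log2. pose proof ln2_pos.
  replace (ln y / ln 2 * ln 2) with (ln y) by (field; lra). apply exp_ln; auto.
Qed.

Lemma le_pow2_log2 (y : R) (n : nat) : 0 < y -> log2 y <= INR n -> y <= 2 ^ n.
Proof.
  intros Hy Hn. rewrite <- (Rpower_log2 y), <- Rpower_pow by lra. apply Rle_Rpower; lra.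
Qed.

Lemma logp_ge0 (t : R) : 0 <= logp t.
Proof. unfold logp. destruct (Rle_dec 1 t); [apply log2_ge0; auto | lra]. Qed.

Lemma log2_succ_le_logp (t : R) : 0 <= t -> log2 (t + 1) <= logp t + 1.
Proof.
  intros Ht. unfold logp. assert (log2 2 = 1) by (unfold log2; pose proof ln2_pos; field; lra).
  destruct (Rle_dec 1 t).
  - assert (Hle : log2 (t + 1) <= log2 (2 * t)) by (apply log2_le; lra).
    rewrite log2_mult in Hle by lra. lra.
  - assert (log2 (t + 1) <= log2 2) by (apply log2_le; lra). lra.
Qed.

Lemma log2_le_2ln (t : R) : 1 <= t -> log2 t <= 2 * ln t.
Proof.
  intros Ht. pose proof ln2_pos. pose proof ln_lt_2.
  assert (0 <= ln t) by (rewrite <- ln_1; apply ln_le; lra).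
  unfold log2. apply (Rmult_le_reg_r (ln 2)); auto. unfold Rdiv.
  rewrite Rmult_assoc, Rinv_l by lra. nra.
Qed.

(** The tangent line of [exp] at [ln (M * d * x^M)]. *)
Lemma ln_le_Rpower (x M d : R) : 0 < x -> 0 < M -> 0 < d ->
  ln x <= d * Rpower x M - (1 + ln (M * d)) / M.
Proof.
  intros Hx HM Hd.
  assert (HMd : 0 < M * d) by nra.
  pose proof (exp_ineq1_le (ln (M * d) + M * ln x)) as H.
  rewrite exp_plus, exp_ln in H by auto. fold (Rpower x M) in H.
  apply (Rmult_le_reg_l M); auto.
  replace (M * (d * Rpower x M - (1 + ln (M * d)) / M))
    with (M * d * Rpower x M - (1 + ln (M * d))) by (field; lra).
  lra.
Qed.

Lemma pow2_ge_succ (n : nat) : INR n + 1 <= 2 ^ n.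
Proof.
  induction n as [|n IH]; [cbn; lra|].
  rewrite S_INR. cbn [pow]. pose proof (pos_INR n). lra.
Qed.

Lemma exists_nat_between (x : R) : 0 <= x -> exists n : nat, x <= INR n <= x + 1.
Proof.
  intros Hx. destruct (archimed x) as [H1 H2].
  assert (Hz : (0 <= up x)%Z) by (apply le_IZR; lra).
  exists (Z.to_nat (up x)). rewrite INR_IZR_INZ, Z2Nat.id; auto. lra.
Qed.

(** * Experts built from nets of the unit ball *)

(** Level [j] of the experts wakes up at round [L (2 j)^M]; at that point the
    aggregating algorithm has earned the entropy cost of a [4^-j]-net. *)
Definition active_from (L M : R) (j n : nat) : bool :=
  Nat.leb j (2 ^ n) && (if Rle_dec (L * rpow (2 * INR j) M) (INR n) then true else false).

Lemma active_from_0 (L M : R) (n : nat) : active_from L M 0 n = true.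
Proof.
  unfold active_from. cbn [Nat.leb]. rewrite Rmult_0_r, rpow_0, Rmult_0_r.
  destruct (Rle_dec 0 (INR n)); auto. pose proof (pos_INR n); lra.
Qed.

Lemma active_from_le_pow2 (L M : R) (j n : nat) : active_from L M j n = true -> (j <= 2 ^ n)%nat.
Proof. now intros [H%Nat.leb_le _]%andb_prop. Qed.

Lemma asleep_before (L M : R) (j i : nat) : 0 <= L -> (1 <= j)%nat ->
  active_from L M j i = false -> INR i < log2 (INR j) + L * rpow (2 * INR j) M.
Proof.
  intros HL Hj Ha.
  assert (0 <= log2 (INR j)) by (apply log2_ge0, (le_INR 1); auto).
  assert (0 <= L * rpow (2 * INR j) M) by (apply Rmult_le_pos; auto; apply rpow_ge0).
  unfold active_from in Ha. destruct (Nat.leb_spec j (2 ^ i)) as [_|Hb]; cbn in Ha.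
  - destruct (Rle_dec (L * rpow (2 * INR j) M) (INR i)); [discriminate | lra].
  - apply lt_INR in Hb. rewrite pow_INR in Hb. replace (INR 2) with 2 in Hb by reflexivity.
    rewrite <- log2_pow2.
    assert (log2 (2 ^ i) < log2 (INR j)) by (apply log2_lt; [apply pow_lt|]; lra). lra.
Qed.

Definition scaled_clip {X} (j : nat) (s : X -> C) (x : X) : C := clip (Cmult (RtoC (2 ^ j)) (s x)).

Lemma loss_clip_le (y H F : C) (e : R) : Cmod y <= 1 -> Cmod (H - F) <= e ->
  loss y (clip H) <= Cmod (y - F) ^ 2 + 4 * e.
Proof.
  intros Hy HHF. pose proof (Cmod_ge_0 (H - F)).
  pose proof (Cmod_ge_0 (y - clip H)). pose proof (Cmod_ge_0 (y - clip F)).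
  set (a := Cmod (y - clip H)) in *. set (b := Cmod (y - clip F)) in *.
  set (c := Cmod (y - F)).
  assert (Hbc : b <= c) by (unfold b, c; rewrite <- (clip_id y Hy) at 1; apply clip_nonexpansive).
  assert (Hab : a <= b + e).
  { unfold a, b. replace (y - clip H)%C with ((y - clip F) + (clip F - clip H))%C
      by (apply injective_projections; cbn; ring).
    eapply Rle_trans; [apply Cmod_triangle|]. apply Rplus_le_compat_l.
    eapply Rle_trans; [apply clip_nonexpansive|].
    replace (F - H)%C with (- (H - F))%C by (apply injective_projections; cbn; ring).
    now rewrite Cmod_opp. }
  assert (a <= 2) by (apply Cmod_sub_le_2; auto; apply clip_Cmod_le_1).
  assert (b <= 2) by (apply Cmod_sub_le_2; auto; apply clip_Cmod_le_1).
  unfold loss. fold a. fold c.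
  assert (b ^ 2 <= c ^ 2) by (apply pow_incr; lra).
  destruct (Rle_lt_dec a b); [assert (a ^ 2 <= b ^ 2) by (apply pow_incr; lra); lra|].
  assert ((a - b) * (a + b) <= e * 4) by (apply Rmult_le_compat; lra). nra.
Qed.

Lemma regret_le_expert {X} (L M : R) (net : nat -> list (X -> C)) (xs : nat -> X) (ys : nat -> C)
    (N j : nat) (s F : X -> C) (e : R) :
  0 <= L -> (1 <= j)%nat -> (forall k, (0 < length (net k))%nat) ->
  (forall i, Cmod (ys i) <= 1) -> In s (net j) ->
  (forall x, Cmod (Cmult (RtoC (2 ^ j)) (s x) - F x) <= e) ->
  cumloss ys (forecast net scaled_clip (active_from L M) xs ys) N
  <= sumN (fun i => Cmod (ys i - F (xs i)) ^ 2) N + 4 * e * INR N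
     + 4 * (log2 (INR j) + L * rpow (2 * INR j) M + 1)
     + / eta * (ln (INR (length (net j))) - ln (prior j)).
Proof.
  intros HL Hj Hnet Hy Hs HF.
  set (g := forecast net scaled_clip (active_from L M) xs ys).
  assert (Hg : forall k, g k = aggregate net scaled_clip (active_from L M) xs ys g k)
    by (intros; apply forecast_fixpoint).
  pose proof (cumloss_le_expert net scaled_clip (active_from L M) Hnet
    (fun j s x => clip_Cmod_le_1 _) (active_from_0 L M) (active_from_le_pow2 L M)
    xs ys g N j s Hg Hy Hs) as Hagg.
  set (asleep := fun i => if negb (active_from L M j i) then 1 else 0).
  assert (He : 0 <= e) by (eapply Rle_trans; [apply Cmod_ge_0 | apply (HF (xs 0%nat))]).
  assert (Hexp : cumloss ys (mu scaled_clip (active_from L M) (j, s) xs g) N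
                 <= sumN (fun i => Cmod (ys i - F (xs i)) ^ 2 + 4 * e + 4 * asleep i) N).
  { apply sumN_le. intros i _. unfold mu, asleep; cbn [fst snd].
    pose proof (pow2_ge_0 (Cmod (ys i - F (xs i)))).
    destruct (active_from L M j i); cbn [negb].
    - pose proof (loss_clip_le (ys i) _ (F (xs i)) e (Hy i) (HF (xs i))). unfold scaled_clip. lra.
    - pose proof (loss_le_4 (ys i) (g i) (Hy i) ltac:(rewrite Hg; apply aggregate_Cmod_le_1;
             [exact Hnet | intros; apply clip_Cmod_le_1 | apply active_from_0])).
      lra. }
  assert (Hcount : sumN asleep N <= log2 (INR j) + L * rpow (2 * INR j) M + 1).
  { apply sumN_indicator_le.
    - pose proof (log2_ge0 (INR j) ltac:(apply (le_INR 1); auto)).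
      pose proof (Rmult_le_pos _ _ HL (rpow_ge0 (2 * INR j) M)). lra.
    - intros i Hi. apply asleep_before; auto. now destruct (active_from L M j i). }
  rewrite !sumN_plus, sumN_const, sumN_scal in Hexp. lra.
Qed.

Lemma ln_inv_prior_le (j : nat) : - ln (prior j) <= 2 * ln (INR j + 2).
Proof.
  pose proof (pos_INR j). unfold prior. rewrite ln_Rinv by nra.
  assert (ln ((INR j + 1) * (INR j + 2)) <= ln ((INR j + 2) * (INR j + 2))) by (apply ln_le; nra).
  rewrite !ln_mult in * by lra. lra.
Qed.

(** The constant of [ln_le_Rpower] for [d = L / 72]. *)
Definition log_slack (L M : R) : R := Rabs ((1 + ln (M * (L / 72))) / M).

Lemma ln_index_le (L M : R) (j : nat) : 0 < L -> 0 < M -> (1 <= j)%nat ->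
  ln (INR j + 2) <= L / 72 * rpow (2 * INR j) M + log_slack L M + 1.
Proof.
  intros HL HM Hj. apply (le_INR 1) in Hj. cbn [INR] in Hj.
  assert (ln (INR j + 2) <= ln (2 * INR j) + 1).
  { pose proof (exp_ineq1_le 1).
    assert (Hle : ln (INR j + 2) <= ln (2 * INR j * exp 1)) by (apply ln_le; nra).
    rewrite ln_mult, ln_exp in Hle by (try apply exp_pos; lra). lra. }
  pose proof (ln_le_Rpower (2 * INR j) M (L / 72) ltac:(lra) HM ltac:(lra)).
  pose proof (Rabs_maj2 ((1 + ln (M * (L / 72))) / M)).
  unfold log_slack. rewrite rpow_pos by lra. lra.
Qed.

Lemma expert_cost_le (L M : R) (j n : nat) : 0 < L -> 0 < M -> (1 <= j)%nat -> (1 <= n)%nat ->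
  log2 (INR n) < 2 * L * rpow (2 * INR j) M + 1 ->
  4 * (log2 (INR j) + L * rpow (2 * INR j) M + 1) + / eta * (ln (INR (S n)) - ln (prior j))
  <= 69 * L * rpow (2 * INR j) M + 140 + 72 * log_slack L M.
Proof.
  intros HL HM Hj Hn Hlog.
  pose proof (ln_index_le L M j HL HM Hj) as Hidx.
  set (rho := rpow (2 * INR j) M) in *.
  assert (0 <= L * rho) by (apply Rmult_le_pos; [lra | apply rpow_ge0]).
  apply (le_INR 1) in Hj, Hn. cbn [INR] in Hj, Hn.
  assert (Hln : ln (INR (S n)) <= 2 * L * rho + 2).
  { pose proof ln2_pos. pose proof ln2_lt_1. pose proof (log2_ge0 _ Hn).
    rewrite S_INR. assert (Hle : ln (INR n + 1) <= ln (2 * INR n)) by (apply ln_le; lra).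
    rewrite ln_mult in Hle by lra.
    replace (ln (INR n)) with (ln 2 * log2 (INR n)) in Hle by (unfold log2; field; lra).
    assert (ln 2 * log2 (INR n) <= log2 (INR n)) by nra. lra. }
  pose proof (ln_inv_prior_le j). pose proof (log2_le_2ln (INR j) Hj).
  assert (ln (INR j) <= ln (INR j + 2)) by (apply ln_le; lra).
  replace (/ eta) with 32 by (unfold eta; field). lra.
Qed.

Lemma rpow_index_le (M lA lE : R) (J0 a b : nat) : 0 < M -> 0 <= lA -> 0 <= lE ->
  INR a <= lA + 2 -> INR b <= lE + 1 ->
  rpow (2 * INR (J0 + a + b)) M
  <= Rpower 3 M * rpow (2 * INR J0 + 6) M + Rpower 6 M * (rpow lA M + rpow lE M).
Proof.
  intros HM HA HE Ha Hb. pose proof (pos_INR J0).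
  eapply Rle_trans.
  { apply (rpow_le_compat _ ((2 * INR J0 + 6) + 2 * lA + 2 * lE)); auto.
    rewrite !plus_INR. pose proof (pos_INR a). pose proof (pos_INR b). lra. }
  eapply Rle_trans; [apply rpow_sum3_le; lra|].
  rewrite !rpow_mult_l by lra.
  replace (Rpower 6 M) with (Rpower 3 M * Rpower 2 M)
    by (rewrite Rpower_mult_distr by lra; f_equal; ring).
  lra.
Qed.

(** [J0] is the first level from which the entropy hypothesis provides nets. *)
Definition regret_offset (L M : R) (J0 : nat) : R :=
  141 + 72 * log_slack L M + 69 * Rpower 3 M * L * rpow (2 * INR J0 + 6) M.

Lemma regret_offset_ge1 (L M : R) (J0 : nat) : 0 < L -> 1 <= regret_offset L M J0.
Proof.
  intros HL. unfold regret_offset, log_slack.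
  pose proof (Rabs_pos ((1 + ln (M * (L / 72))) / M)).
  pose proof (rpow_ge0 (2 * INR J0 + 6) M). pose proof (exp_pos (M * ln 3)).
  assert (0 <= 69 * Rpower 3 M * L * rpow (2 * INR J0 + 6) M)
    by (apply Rmult_le_pos; [unfold Rpower; nra | auto]).
  lra.
Qed.

(** * Approximation in [C(X)] *)

Lemma Glb_Rbar_witness_lt (E : R -> Prop) (b : R) :
  Rbar_le (Glb_Rbar E) (Finite b) -> exists r, E r /\ r < b + 1.
Proof.
  intros Hglb. apply NNPP. intros Hn.
  assert (Hlb : is_lb_Rbar E (Finite (b + 1))).
  { intros r Hr. cbn. destruct (Rle_dec (b + 1) r); auto.
    exfalso; apply Hn; exists r; split; auto; lra. }
  pose proof (Rbar_le_trans _ _ _ (proj2 (Glb_Rbar_correct E) _ Hlb) Hglb) as Hle. cbn in Hle. lra.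
Qed.

Lemma Glb_Rbar_finite (E : R -> Prop) (b r : R) : (forall r, E r -> b <= r) -> E r ->
  Glb_Rbar E = Finite (real (Glb_Rbar E)) /\ b <= real (Glb_Rbar E).
Proof.
  intros Hb Hr.
  assert (Rbar_le (Finite b) (Glb_Rbar E))
    by (apply (proj2 (Glb_Rbar_correct E)); intros x Hx; now apply Hb).
  assert (Rbar_le (Glb_Rbar E) (Finite r)) by now apply (proj1 (Glb_Rbar_correct E)).
  destruct (Glb_Rbar E); cbn in *; tauto.
Qed.

Lemma Cmod_le_supnorm {X} (f : X -> C) : (exists B, forall x, Cmod (f x) <= B) ->
  forall x, Cmod (f x) <= supnorm f.
Proof.
  intros [B HB] x. unfold supnorm.
  destruct (Lub_Rbar_correct (fun r => exists x, r = Cmod (f x))) as [Hub Hlub].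
  assert (Rbar_le (Finite (Cmod (f x))) (Lub_Rbar (fun r => exists x, r = Cmod (f x))))
    by (apply Hub; eauto).
  assert (Rbar_le (Lub_Rbar (fun r => exists x, r = Cmod (f x))) (Finite B))
    by (apply Hlub; intros r [y ->]; cbn; auto).
  destruct (Lub_Rbar (fun r => exists x, r = Cmod (f x))); cbn in *; tauto.
Qed.

Lemma CX_fsub_bounded {X} (T : topology X) (f g : X -> C) : CX T f -> CX T g ->
  exists B, forall x, Cmod (fsub f g x) <= B.
Proof.
  intros [_ [B1 H1]] [_ [B2 H2]]. exists (B1 + B2). intros x. unfold fsub, Cminus.
  eapply Rle_trans; [apply Cmod_triangle|]. rewrite Cmod_opp.
  specialize (H1 x); specialize (H2 x); lra.
Qed.

(** Density makes the infimum defining the approachability finite. *)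
Lemma approach_attained {X} (T : topology X) (Fsp : (X -> C) -> Prop) (nF : (X -> C) -> R)
    (F : X -> C) (eps : R) :
  banach_cd_embedded T Fsp nF -> CX T F -> 0 < eps ->
  0 <= approach T Fsp nF eps F /\
  exists Fs, Fsp Fs /\ supnorm (fsub F Fs) <= eps /\ nF Fs < approach T Fsp nF eps F + 1.
Proof.
  intros (_ & _ & _ & _ & Hnn & _ & _ & _ & _ & Hden & _) HF He.
  set (E := fun r => exists Fs, Fsp Fs /\ supnorm (fsub F Fs) <= eps /\ r = nF Fs).
  destruct (Hden F HF eps He) as (f & Hf & Hsf).
  destruct (Glb_Rbar_finite E 0 (nF f)) as [Hfin Hge].
  - intros r (Fs & H1 & _ & ->); auto.
  - exists f; repeat split; auto; lra.
  - unfold approach. fold E. split; auto.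
    assert (Hle : Rbar_le (Glb_Rbar E) (Finite (real (Glb_Rbar E))))
      by (rewrite Hfin at 1; cbn; lra).
    destruct (Glb_Rbar_witness_lt E _ Hle) as (r & (Fs & H1 & H2 & ->) & H3). exists Fs; auto.
Qed.

(** The size bound is the limsup hypothesis with slack [L] at [eps = 4^-j],
    where [log2 (1/eps) = 2 j]. *)
Definition entropy_net {X} (Fsp : (X -> C) -> Prop) (nF : (X -> C) -> R) (L M : R) (j : nat)
    (l : list (X -> C)) : Prop :=
  (forall s, In s l -> unit_ball Fsp nF s) /\
  (forall a, unit_ball Fsp nF a -> exists s, In s l /\ supnorm (fsub a s) <= / 2 ^ (2 * j)) /\
  log2 (INR (length l)) < 2 * L * rpow (2 * INR j) M + 1.

Lemma net_of_Hent_le {X} (A : (X -> C) -> Prop) (eps M c : R) :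
  0 < rpow (log2 (/ eps)) M ->
  Rbar_le (Rbar_mult (Hent A eps) (Finite (/ rpow (log2 (/ eps)) M))) (Finite c) ->
  exists l, (forall s, In s l -> A s) /\
    (forall a, A a -> exists s, In s l /\ supnorm (fsub a s) <= eps) /\
    log2 (INR (length l)) < c * rpow (log2 (/ eps)) M + 1.
Proof.
  intros Hr Hc.
  assert (Hle : Rbar_le (Hent A eps) (Finite (c * rpow (log2 (/ eps)) M))).
  { destruct (Hent A eps) as [h| |]; cbn in *; auto.
    - apply (Rmult_le_reg_r (/ rpow (log2 (/ eps)) M)); [apply Rinv_0_lt_compat; lra|].
      rewrite Rmult_assoc, Rinv_r, Rmult_1_r by lra. exact Hc.
    - unfold Rbar_mult in Hc; cbn in Hc.
      destruct (Rle_dec 0 (/ rpow (log2 (/ eps)) M)) as [Hp|Hp];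
        [|pose proof (Rinv_0_lt_compat _ Hr); lra].
      destruct (Rle_lt_or_eq_dec _ _ Hp) as [|Hz]; cbn in Hc; [tauto|].
      pose proof (Rinv_0_lt_compat _ Hr); lra. }
  destruct (Glb_Rbar_witness_lt _ _ Hle) as (r & (n & (l & Hl1 & Hl2 & Hl3) & ->) & Hlt).
  exists l. subst n. auto.
Qed.

Lemma entropy_nets_exist {X} (Fsp : (X -> C) -> Prop) (nF : (X -> C) -> R) (L M : R) :
  0 < L ->
  limsup0_is (fun eps => Rbar_mult (Hent (unit_ball Fsp nF) eps)
                                   (Finite (/ rpow (log2 (/ eps)) M))) L ->
  exists J0, (1 <= J0)%nat /\ forall j, (J0 <= j)%nat -> exists l, entropy_net Fsp nF L M j l.
Proof.
  intros HL [Hlim _]. destruct (Hlim L HL) as (d & Hd & Hdb).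
  destruct (exists_nat_between (/ d)) as (J & HJ); [apply Rlt_le, Rinv_0_lt_compat; auto|].
  exists (S J). split; [lia|]. intros j Hj.
  assert (Hlog : log2 (/ / 2 ^ (2 * j)) = 2 * INR j)
    by (rewrite Rinv_inv, log2_pow2, mult_INR; reflexivity).
  assert (Hsmall : 0 < / 2 ^ (2 * j) < d).
  { split; [apply Rinv_0_lt_compat, pow_lt; lra|].
    assert (HJj : INR (S J) <= INR (2 * j)) by (apply le_INR; lia). rewrite S_INR in HJj.
    pose proof (pow2_ge_succ (2 * j)). rewrite <- (Rinv_inv d).
    apply Rinv_lt_contravar;
      [apply Rmult_lt_0_compat; [apply Rinv_0_lt_compat | apply pow_lt]|]; lra. }
  assert (Hrho : 0 < rpow (2 * INR j) M).
  { assert (1 <= INR j) by (apply (le_INR 1); lia). rewrite rpow_pos by lra. apply exp_pos. }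
  specialize (Hdb _ Hsmall). cbv beta in Hdb. rewrite Hlog in Hdb.
  destruct (net_of_Hent_le (unit_ball Fsp nF) (/ 2 ^ (2 * j)) M (L + L)) as (l & H1 & H2 & H3);
    rewrite ?Hlog; auto.
  exists l. split; [|split]; auto. rewrite Hlog in H3. lra.
Qed.

Lemma net_point_close {X} (T : topology X) (Fsp : (X -> C) -> Prop) (nF : (X -> C) -> R)
    (L M : R) (j : nat) (l : list (X -> C)) (F Fs : X -> C) (eps : R) :
  banach_cd_embedded T Fsp nF -> entropy_net Fsp nF L M j l -> CX T F -> Fsp Fs ->
  supnorm (fsub F Fs) <= eps -> nF Fs <= 2 ^ j -> / 2 ^ j <= eps ->
  exists s, In s l /\ forall x, Cmod (Cmult (RtoC (2 ^ j)) (s x) - F x) <= 2 * eps.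
Proof.
  intros (HCX & _ & _ & Hsc & _ & _ & Hhom & _) (Hl & Hnet & _) HF HFs HFFs HnFs Hje.
  assert (Hpj : 0 < 2 ^ j) by (apply pow_lt; lra).
  set (u := fscal (RtoC (/ 2 ^ j)) Fs).
  assert (Hu : unit_ball Fsp nF u).
  { split; [now apply Hsc|]. unfold u. rewrite Hhom, Cmod_R, Rabs_right by
      (auto; apply Rle_ge, Rlt_le, Rinv_0_lt_compat; auto).
    apply (Rmult_le_reg_l (2 ^ j)); auto. rewrite <- Rmult_assoc, Rinv_r; lra. }
  destruct (Hnet u Hu) as (s & Hs & Hus). exists s. split; auto. intros x.
  pose proof (Cmod_le_supnorm _ (CX_fsub_bounded T F Fs HF (HCX _ HFs)) x) as HFx.
  pose proof (Cmod_le_supnorm _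
    (CX_fsub_bounded T u s (HCX _ (proj1 Hu)) (HCX _ (proj1 (Hl s Hs)))) x) as Hux.
  change (fsub F Fs x) with (F x - Fs x)%C in HFx.
  change (fsub u s x) with (u x - s x)%C in Hux.
  replace (Cmult (RtoC (2 ^ j)) (s x) - F x)%C
    with (Cplus (Cmult (RtoC (2 ^ j)) (Copp (u x - s x))) (Copp (F x - Fs x)))
    by (unfold u, fscal; apply injective_projections; cbn; field; lra).
  eapply Rle_trans; [apply Cmod_triangle|].
  rewrite Cmod_mult, !Cmod_opp, Cmod_R, Rabs_right by lra.
  assert (Hscaled : 2 ^ j * Cmod (u x - s x) <= 2 ^ j * / 2 ^ (2 * j))
    by (apply Rmult_le_compat_l; lra).
  replace (2 ^ j * / 2 ^ (2 * j)) with (/ 2 ^ j) in Hscaled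
    by (replace (2 * j)%nat with (j + j)%nat by lia; rewrite pow_add; field; lra).
  lra.
Qed.

Definition chosen_net {X} (Fsp : (X -> C) -> Prop) (nF : (X -> C) -> R) (L M : R) (j : nat)
  : list (X -> C) := epsilon (inhabits nil) (entropy_net Fsp nF L M j).

(** [fzero] keeps every level nonempty, including the levels below [J0] where no
    net is guaranteed. *)
Definition expert_nets {X} (Fsp : (X -> C) -> Prop) (nF : (X -> C) -> R) (L M : R) (j : nat)
  : list (X -> C) := fzero :: chosen_net Fsp nF L M j.

Lemma regret_le_at_eps {X} (T : topology X) (Fsp : (X -> C) -> Prop) (nF : (X -> C) -> R)
    (L M : R) (J0 : nat) (F : X -> C) (xs : nat -> X) (ys : nat -> C) (N : nat) (eps : R) :
  banach_cd_embedded T Fsp nF -> 0 < L -> 0 < M -> (1 <= J0)%nat ->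
  (forall j, (J0 <= j)%nat -> exists l, entropy_net Fsp nF L M j l) ->
  CX T F -> (forall i, Cmod (ys i) <= 1) -> 0 < eps <= 1 ->
  cumloss ys (forecast (expert_nets Fsp nF L M) scaled_clip (active_from L M) xs ys) N
  <= sumN (fun i => Cmod (ys i - F (xs i)) ^ 2) N
     + (69 * Rpower 6 M + 8) * (L * rpow (logp (approach T Fsp nF eps F)) M
                                + L * rpow (log2 (/ eps)) M + eps * INR N)
     + (regret_offset L M J0 - 1).
Proof.
  intros Hban HL HM HJ0 Hnets HF Hy He.
  destruct (approach_attained T Fsp nF F eps Hban HF (proj1 He))
    as (HA & Fs & HFs & HFFs & HnFs).
  set (A := approach T Fsp nF eps F) in *.
  assert (Hie : 1 <= / eps) by (rewrite <- Rinv_1; apply Rinv_le_contravar; lra).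
  destruct (exists_nat_between (log2 (A + 1))) as (a & Ha); [apply log2_ge0; lra|].
  destruct (exists_nat_between (log2 (/ eps))) as (b & Hb); [apply log2_ge0; lra|].
  set (j := (J0 + a + b)%nat).
  assert (Hpow : forall k, (k <= j)%nat -> 2 ^ k <= 2 ^ j)
    by (intros; apply Rle_pow; [lra | auto]).
  assert (HnFj : nF Fs <= 2 ^ j).
  { pose proof (le_pow2_log2 (A + 1) a ltac:(lra) ltac:(lra)). pose proof (Hpow a ltac:(lia)).
    lra. }
  assert (Hje : / 2 ^ j <= eps).
  { pose proof (le_pow2_log2 (/ eps) b ltac:(lra) ltac:(lra)). pose proof (Hpow b ltac:(lia)).
    rewrite <- (Rinv_inv eps). apply Rinv_le_contravar; [apply Rinv_0_lt_compat|]; lra. }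
  pose proof (epsilon_spec (inhabits nil) _ (Hnets j ltac:(lia))) as Hnet.
  fold (chosen_net Fsp nF L M j) in Hnet.
  destruct (net_point_close T Fsp nF L M j _ F Fs eps Hban Hnet HF HFs HFFs HnFj Hje)
    as (s & Hs & Hclose).
  assert (Hlen : (1 <= length (chosen_net Fsp nF L M j))%nat)
    by (destruct (chosen_net _ _ _ _ j); [destruct Hs | cbn; lia]).
  pose proof (regret_le_expert L M (expert_nets Fsp nF L M) xs ys N j s F (2 * eps) ltac:(lra)
    ltac:(unfold j; lia) (fun k => Nat.lt_0_succ _) Hy (or_intror Hs) Hclose) as Hreg.
  pose proof (expert_cost_le L M j _ HL HM ltac:(unfold j; lia) Hlen (proj2 (proj2 Hnet))) as Hcost.
  pose proof (rpow_index_le M (logp A) (log2 (/ eps)) J0 a b HM (logp_ge0 A) (log2_ge0 _ Hie)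
    ltac:(pose proof (log2_succ_le_logp A HA); lra) ltac:(lra)) as Hrho.
  fold j in Hrho.
  change (length (expert_nets Fsp nF L M j)) with (S (length (chosen_net Fsp nF L M j))) in Hreg.
  unfold regret_offset.
  pose proof (rpow_ge0 (logp A) M). pose proof (rpow_ge0 (log2 (/ eps)) M).
  pose proof (exp_pos (M * ln 6)). pose proof (pos_INR N).
  assert (0 <= eps * INR N) by (apply Rmult_le_pos; lra).
  fold (Rpower 6 M) in *. nra.
Qed.

(** Either [eps N >= D], or [eps < D / N <= 2^-((D/L)^(1/M))] and then
    [L log^M (1/eps) >= D]. *)
Lemma offset_le_value (L M D lA eps : R) (N0 N : nat) : 0 < L -> 0 < M -> 1 <= D ->
  D * Rpower 2 (Rpower (D / L) (/ M)) <= INR N0 -> (N0 <= N)%nat -> 0 < eps <= 1 ->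
  D <= L * rpow lA M + L * rpow (log2 (/ eps)) M + eps * INR N.
Proof.
  intros HL HM HD HN0 HN He.
  set (t0 := Rpower (D / L) (/ M)) in *.
  assert (Ht0 : 0 < t0) by apply exp_pos.
  assert (H2t : 0 < Rpower 2 t0) by apply exp_pos.
  assert (HNN : INR N0 <= INR N) by (apply le_INR; auto).
  pose proof (Rmult_le_pos _ _ (Rlt_le _ _ HL) (rpow_ge0 lA M)).
  pose proof (Rmult_le_pos _ _ (Rlt_le _ _ HL) (rpow_ge0 (log2 (/ eps)) M)).
  destruct (Rle_dec D (eps * INR N)); [lra|].
  assert (HNpos : 0 < INR N) by nra.
  assert (Hie : Rpower 2 t0 <= / eps).
  { apply (Rmult_le_reg_l (eps * D)); [nra|].
    replace (eps * D * / eps) with D by (field; lra). nra. }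
  assert (Hl : t0 <= log2 (/ eps)) by (rewrite <- (log2_Rpower t0); apply log2_le; auto).
  assert (Hr : rpow t0 M <= rpow (log2 (/ eps)) M) by (apply rpow_le_compat; lra).
  rewrite rpow_pos in Hr by auto. unfold t0 in Hr.
  rewrite Rpower_mult, Rinv_l, Rpower_1 in Hr by (try apply Rdiv_lt_0_compat; lra).
  apply (Rmult_le_compat_l L) in Hr; [|lra].
  replace (L * (D / L)) with D in Hr by (field; lra).
  pose proof (Rmult_le_pos _ _ (Rlt_le _ _ (proj1 He)) (pos_INR N)). lra.
Qed.

Lemma le_plus_scal_real_Glb (E : R -> Prop) (a b c r0 : R) :
  0 < c -> E r0 -> (forall r, E r -> a <= b + c * r) -> a <= b + c * real (Glb_Rbar E).
Proof.
  intros Hc Hr0 Hle.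
  destruct (Glb_Rbar_finite E ((a - b) / c) r0) as [_ Hge]; auto.
  - intros r Hr. apply (Rmult_le_reg_l c); auto. specialize (Hle r Hr).
    replace (c * ((a - b) / c)) with (a - b) by (field; lra). lra.
  - apply (Rmult_le_compat_l c) in Hge; [|lra].
    replace (c * ((a - b) / c)) with (a - b) in Hge by (field; lra). lra.
Qed.

Theorem corollary6 :
  forall M : R, 0 < M ->
  exists CM : R,
  forall (X : Type) (T : topology X), inhabited X ->
  forall (Fsp : (X -> C) -> Prop) (nF : (X -> C) -> R),
    banach_cd_embedded T Fsp nF ->
  forall L : R, 0 < L ->
    limsup0_is
      (fun eps => Rbar_mult (Hent (unit_ball Fsp nF) eps)
                            (Finite (/ rpow (log2 (/ eps)) M))) L ->
  exists S : strategy X,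
  forall F : X -> C, CX T F ->
  exists N0 : nat, forall N : nat, (N0 <= N)%nat ->
  forall (x : nat -> X) (y : nat -> C), (forall n, Cmod (y n) <= 1) ->
    sumN (fun n => (Cmod (Cminus (y n) (pred_move S x y n))) ^ 2) N
    <= sumN (fun n => (Cmod (Cminus (y n) (F (x n)))) ^ 2) N
       + CM * real (Glb_Rbar (fun r => exists eps, 0 < eps <= 1 /\
             r = L * rpow (logp (approach T Fsp nF eps F)) M
                 + L * rpow (log2 (/ eps)) M
                 + eps * INR N)).
Proof.
  intros M HM. exists (69 * Rpower 6 M + 9).
  intros X T _ Fsp nF Hban L HL Hlim.
  destruct (entropy_nets_exist Fsp nF L M HL Hlim) as (J0 & HJ0 & Hnets).
  exists (aa_strategy (expert_nets Fsp nF L M) scaled_clip (active_from L M)).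
  intros F HF.
  pose proof (regret_offset_ge1 L M J0 HL) as HD.
  set (D := regret_offset L M J0) in *.
  destruct (exists_nat_between (D * Rpower 2 (Rpower (D / L) (/ M)))) as (N0 & HN0).
  { apply Rmult_le_pos; [lra | apply Rlt_le, exp_pos]. }
  exists N0. intros N HN x y Hy.
  erewrite sumN_ext by (intros; now rewrite pred_move_aa_strategy).
  apply le_plus_scal_real_Glb with (r0 := L * rpow (logp (approach T Fsp nF 1 F)) M
                                           + L * rpow (log2 (/ 1)) M + 1 * INR N).
  - pose proof (exp_pos (M * ln 6)). unfold Rpower. lra.
  - exists 1. split; [lra | reflexivity].
  - intros r (eps & He & ->).
    pose proof (regret_le_at_eps T Fsp nF L M J0 F x y N eps Hban HL HM HJ0 Hnets HF Hy He) as Hreg.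
    pose proof (offset_le_value L M D (logp (approach T Fsp nF eps F)) eps N0 N HL HM HD
                  (proj1 HN0) HN He).
    fold D in Hreg. unfold cumloss, loss in Hreg. lra.
Qed.
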